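(* Let $S$ be an idempotent semiring. The following are equivalent: (1) $\mathcal{L}^{\bullet}$ is the least distributive lattice congruence on $S$; (2) $\mathcal{D}^{+}\subseteq\mathcal{L}^{\bullet}$ and $S$ satisfies $x+xy+x\approx x$; (3) $S$ satisfies $x+xyx+x\approx x$ and $\mathcal{R}^{\bullet}\subseteq\mathcal{D}^{+}\subseteq\mathcal{L}^{\bullet}$; (4) $\leq^{l}_{\cdot}\ \subseteq\ \leq_{+}$ on $S$; (5) $S$ satisfies the identity $x\approx xy+x+xy$; (6) $S$ satisfies the identity $x\approx x(y+x+y)$.
   Context: An idempotent semiring is an algebra $(S,+,\cdot)$ with two binary operations such that $(S,+)$ and $(S,\cdot)$ are bands (associative, with $x+x=x$ and $xx=x$), and both distributive laws $x(y+z)=xy+xz$ and $(x+y)z=xz+yz$ hold; addition is not assumed commutative. A distributive lattice congruence on $S$ is a congruence $\rho$ such that $S/\rho$ satisfies $x+y\approx y+x$, $xy\approx yx$ and $x+xy\approx x$. Green's relations: $a\,\mathcal{L}^{\bullet}\,b$ iff $ab=a$ and $ba=b$; $a\,\mathcal{R}^{\bullet}\,b$ iff $ab=b$ and $ba=a$; $a\,\mathcal{D}^{+}\,b$ iff $a+b+a=a$ and $b+a+b=b$. Orders: $a\leq^{l}_{\cdot} b$ iff $a=ba$; $a\leq_{+} b$ iff $b=a+b$ and $b=b+a$. *)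

Section Defs.
Variable S : Type.
Variables (add mul : S -> S -> S).

(* Idempotent semiring: (S,+) and (S,.) are bands, both distributive laws;
   addition not assumed commutative. *)
Record idempotent_semiring : Prop := {
  add_assoc : forall x y z, add x (add y z) = add (add x y) z;
  add_idem  : forall x, add x x = x;
  mul_assoc : forall x y z, mul x (mul y z) = mul (mul x y) z;
  mul_idem  : forall x, mul x x = x;
  distr_l   : forall x y z, mul x (add y z) = add (mul x y) (mul x z);
  distr_r   : forall x y z, mul (add x y) z = add (mul x z) (mul y z)
}.

Definition rel_incl (R R' : S -> S -> Prop) : Prop := forall a b, R a b -> R' a b.

Record congruence (rho : S -> S -> Prop) : Prop := {
  cong_refl  : forall x, rho x x;
  cong_sym   : forall x y, rho x y -> rho y x;
  cong_trans : forall x y z, rho x y -> rho y z -> rho x z;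
  cong_add   : forall x x' y y', rho x x' -> rho y y' -> rho (add x y) (add x' y');
  cong_mul   : forall x x' y y', rho x x' -> rho y y' -> rho (mul x y) (mul x' y')
}.

(* S/rho satisfies x+y = y+x, xy = yx, x + xy = x. *)
Definition dl_congruence (rho : S -> S -> Prop) : Prop :=
  congruence rho /\
  (forall x y, rho (add x y) (add y x)) /\
  (forall x y, rho (mul x y) (mul y x)) /\
  (forall x y, rho (add x (mul x y)) x).

Definition least_dl_congruence (rho : S -> S -> Prop) : Prop :=
  dl_congruence rho /\ forall sigma, dl_congruence sigma -> rel_incl rho sigma.

Definition Ldot (a b : S) : Prop := mul a b = a /\ mul b a = b.
Definition Rdot (a b : S) : Prop := mul a b = b /\ mul b a = a.
Definition Dplus (a b : S) : Prop := add (add a b) a = a /\ add (add b a) b = b.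

Definition le_ldot (a b : S) : Prop := a = mul b a.
Definition le_plus (a b : S) : Prop := b = add a b /\ b = add b a.

End Defs.

(* Everything reduces to the identity x = xy + x + xy.  It splits into the
   two absorption laws x + xy = x = xy + x, which in turn force the left
   regularity xyx = xy; these three laws are exactly what makes L• compatible
   with + and ., and the quotient by L• a distributive lattice.  Conversely
   every distributive lattice congruence contains L• (it identifies ab with
   ba) and D+ (it identifies a + b with b + a), so leastness is automatic.
   In (2) and (3) the inclusions recover the missing laws: x is D+-related to
   x + xy and xy + x, and xy is R•-related to xyx. *)

From Corelib Require Import ssreflect.

Set Implicit Arguments.

Section IdempotentSemiring.
Variables (S : Type) (add mul : S -> S -> S).
Hypothesis HS : idempotent_semiring S add mul.

Local Notation "x + y" := (add x y).
Local Notation "x * y" := (mul x y).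
Local Notation Ldot := (Ldot S mul).
Local Notation Rdot := (Rdot S mul).
Local Notation Dplus := (Dplus S add).
Local Notation dl_congruence := (dl_congruence S add mul).

Let addA := add_assoc _ _ _ HS.
Let addxx := add_idem _ _ _ HS.
Let mulA := mul_assoc _ _ _ HS.
Let mulxx := mul_idem _ _ _ HS.
Let mulDr := distr_l _ _ _ HS.
Let mulDl := distr_r _ _ _ HS.

Lemma Ldot_trans a b c : Ldot a b -> Ldot b c -> Ldot a c.
Proof.
move=> [ab ba] [bc cb]; split.
- by rewrite -{1}ab -mulA bc ab.
- by rewrite -{1}cb -mulA ba cb.
Qed.

Lemma Ldot_incl_dl_congruence rho : dl_congruence rho -> rel_incl S Ldot rho.
Proof. by move=> [_ [_ [rho_mulC _]]] a b [ab ba]; rewrite -ab -{2}ba. Qed.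

Lemma Dplus_incl_dl_congruence rho : dl_congruence rho -> rel_incl S Dplus rho.
Proof.
move=> [rhoC [rho_addC _]] a b [aba bab].
have swap_left u v : rho (v + u) (u + v + u).
  have h := cong_add _ _ _ _ rhoC _ _ _ _ (rho_addC v u) (cong_refl _ _ _ _ rhoC u).
  by rewrite -addA addxx in h.
have rho_ba_a : rho (b + a) a by rewrite -{2}aba; apply: swap_left.
have rho_ab_b : rho (a + b) b by rewrite -{2}bab; apply: swap_left.
apply: (cong_trans _ _ _ _ rhoC _ (b + a)); first exact: (cong_sym _ _ _ _ rhoC).
exact: (cong_trans _ _ _ _ rhoC _ (a + b)).
Qed.

Lemma mul_sandwich x y : x * (y + x + y) = x * y + x + x * y.
Proof. by rewrite !mulDr mulxx. Qed.

Section Absorption.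
Hypothesis absorb : forall x y, x = x * y + x + x * y.

Lemma add_mulr_absorb x y : x + x * y = x.
Proof. by rewrite {1}(absorb x y) -addA addxx -absorb. Qed.

Lemma add_mull_absorb x y : x * y + x = x.
Proof. by rewrite {2}(absorb x y) !addA addxx -absorb. Qed.

(* Multiply xy + x = x on the left by xy. *)
Lemma mul_left_regular x y : x * y * x = x * y.
Proof.
rewrite -{2}(add_mull_absorb x y) mulDr mulxx.
exact: add_mulr_absorb.
Qed.

Lemma Ldot_congruence : congruence S add mul Ldot.
Proof.
split.
- by move=> x; split.
- by move=> x y [xy yx]; split.
- exact: Ldot_trans.
- move=> a a' b b' [aa' a'a] [bb' b'b]; split.
  + by rewrite mulDl !mulDr aa' bb' add_mulr_absorb add_mull_absorb.
  + by rewrite mulDl !mulDr a'a b'b add_mulr_absorb add_mull_absorb.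
- move=> a a' b b' [aa' a'a] [bb' b'b]; split.
  + have aba' : a * b * a' = a * b by rewrite -(mul_left_regular a b) -mulA aa'.
    by rewrite mulA aba' -mulA bb'.
  + have a'b'a : a' * b' * a = a' * b' by rewrite -(mul_left_regular a' b') -mulA a'a.
    by rewrite mulA a'b'a -mulA b'b.
Qed.

Lemma Ldot_dl_congruence : dl_congruence Ldot.
Proof.
split; first exact: Ldot_congruence.
split; [|split].
- by move=> x y; split; rewrite mulDl !mulDr !mulxx add_mulr_absorb add_mull_absorb.
- move=> x y; split.
  + by rewrite mulA -(mulA x y y) mulxx mul_left_regular.
  + by rewrite mulA -(mulA y x x) mulxx mul_left_regular.
- by move=> x y; rewrite add_mulr_absorb; split.
Qed.

End Absorption.

Lemma least_dl_congruence_Ldot_absorb :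
  least_dl_congruence S add mul Ldot <->
  (forall x y, x = x * y + x + x * y).
Proof.
split.
- move=> [[rhoC [rho_addC [rho_mulC rho_absorb]]] _] x y.
  have [_ xxy] := rho_absorb x y.
  rewrite mulDr mulxx mulA mulxx in xxy.
  have [xyx _] := rho_mulC x y.
  rewrite mulA -(mulA x y y) mulxx in xyx.
  have [sum_eq _] := rho_addC x (x * y).
  rewrite mulDl !mulDr !mulxx (mulA x x y) mulxx xyx addxx in sum_eq.
  by rewrite sum_eq xxy.
- move=> absorb; split; first exact: Ldot_dl_congruence.
  exact: Ldot_incl_dl_congruence.
Qed.

Lemma le_ldot_incl_le_plus_absorb :
  rel_incl S (le_ldot S mul) (le_plus S add) <->
  (forall x y, x = x * y + x + x * y).
Proof.
split.
- move=> le_incl x y.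
  have [x_xyx x_xxy] : le_plus S add (x * y) x.
    by apply: le_incl; rewrite /le_ldot mulA mulxx.
  by rewrite -x_xyx -x_xxy.
- move=> absorb a b ab; rewrite /le_plus ab.
  by rewrite add_mull_absorb // add_mulr_absorb.
Qed.

Lemma mul_sandwich_absorb :
  (forall x y, x = x * (y + x + y)) <-> (forall x y, x = x * y + x + x * y).
Proof. by split=> H x y; [rewrite -mul_sandwich | rewrite mul_sandwich]; apply: H. Qed.

Lemma absorb_of_Dplus_incl_Ldot :
  rel_incl S Dplus Ldot -> (forall x y, x + x * y + x = x) ->
  forall x y, x = x * y + x + x * y.
Proof.
move=> DL xxyx x y.
have xxyx' u v : u + (u * v + u) = u by rewrite addA xxyx.
have [xxy _] : Ldot x (x + x * y).
  apply: DL; split; first by rewrite -!addA xxyx' addxx.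
  by rewrite xxyx addA addxx.
have [xyx _] : Ldot x (x * y + x).
  apply: DL; split; first by rewrite addA xxyx addxx.
  by rewrite -!addA xxyx' addxx.
rewrite mulDr mulxx mulA mulxx in xxy; rewrite mulDr mulA mulxx in xyx.
by rewrite xyx xxy.
Qed.

Lemma mul_left_regular_of_Rdot_Dplus_Ldot :
  rel_incl S Rdot Dplus -> rel_incl S Dplus Ldot ->
  forall x y, x * y * x = x * y.
Proof.
move=> RD DL x y.
have [h _] : Ldot (x * y) (x * y * x).
  apply/DL/RD; split; first by rewrite mulA mulxx.
  by rewrite -mulA (mulA x x y) mulxx mulxx.
by rewrite mulA mulxx in h.
Qed.

Lemma Rdot_incl_Dplus_absorb :
  (forall x y, x = x * y + x + x * y) -> rel_incl S Rdot Dplus.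
Proof.
move=> absorb a b [ab ba]; split.
- by rewrite -ab add_mulr_absorb // addxx.
- by rewrite -ba add_mulr_absorb // addxx.
Qed.

End IdempotentSemiring.

Theorem theorem3p3 (S : Type) (add mul : S -> S -> S)
  (HS : idempotent_semiring S add mul) :
  let L := Ldot S mul in
  let R := Rdot S mul in
  let D := Dplus S add in
  let P1 := least_dl_congruence S add mul L in
  let P2 := rel_incl S D L /\
            (forall x y : S, add (add x (mul x y)) x = x) in
  let P3 := (forall x y : S, add (add x (mul (mul x y) x)) x = x) /\
            rel_incl S R D /\ rel_incl S D L in
  let P4 := rel_incl S (le_ldot S mul) (le_plus S add) in
  let P5 := forall x y : S, x = add (add (mul x y) x) (mul x y) in
  let P6 := forall x y : S, x = mul x (add (add y x) y) in
  (P1 <-> P2) /\ (P1 <-> P3) /\ (P1 <-> P4) /\ (P1 <-> P5) /\ (P1 <-> P6).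
Proof.
move=> L R D P1 P2 P3 P4 P5 P6.
have E15 : P1 <-> P5 := least_dl_congruence_Ldot_absorb HS.
have DL : P1 -> rel_incl S D L := fun H1 => Dplus_incl_dl_congruence HS (proj1 H1).
have xxyx : P5 -> forall x y, add (add x (mul x y)) x = x.
  by move=> H5 x y; rewrite (add_mulr_absorb HS H5) (add_idem _ _ _ HS).
have E12 : P1 <-> P2.
  split=> [H1 | [HDL H2]]; first by split; [apply: DL | apply/xxyx/E15].
  exact/E15/(absorb_of_Dplus_incl_Ldot HS).
have E13 : P1 <-> P3.
{ split=> [H1 | [H3 [HRD HDL]]].
  - have H5 : P5 by apply/E15.
    split; last by split; [exact: Rdot_incl_Dplus_absorb | exact: DL].
    by move=> x y; rewrite (mul_left_regular HS H5) xxyx.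
  - apply/E12; split=> // x y.
    by rewrite -(mul_left_regular_of_Rdot_Dplus_Ldot HS HRD HDL) H3. }
split; first exact: E12.
split; first exact: E13.
split; first exact: iff_trans E15 (iff_sym (le_ldot_incl_le_plus_absorb HS)).
split; first exact: E15.
exact: iff_trans E15 (iff_sym (mul_sandwich_absorb HS)).
Qed.
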